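(* Let $g\colon\mathbb X\to\mathbb Y$ be continuously differentiable, $D\subset\mathbb Y$ closed, $\Phi(x):=g(x)-D$, $(\bar x,0)\in\operatorname{gph}\Phi$, $u\in\mathbb S_{\mathbb X}$, and let $\{e_1,\dots,e_m\}$ be an orthonormal basis of $\mathbb Y$. Then $\Phi$ is quasi-normal in direction $u$ at $(\bar x,0)$ w.r.t. $\{e_1,\dots,e_m\}$ if and only if there does not exist a nonzero $\lambda\in\mathcal N_D(g(\bar x);\nabla g(\bar x)u)$ with $\nabla g(\bar x)^*\lambda=0$ for which there are sequences $\{x_k\}\subset\mathbb X$ with $x_k\ne\bar x$, $\{z_k\}\subset D$, $\{\lambda_k\}\subset\mathbb Y$ with $x_k\to\bar x$, $z_k\to g(\bar x)$, $\lambda_k\to\lambda$, $(x_k-\bar x)/\|x_k-\bar x\|\to u$, $(z_k-g(\bar x))/\|x_k-\bar x\|\to\nabla g(\bar x)u$, and, for all $k$ and $i$, $\lambda_k\in\widehat{\mathcal N}_D(z_k)$ and $\langle\lambda,e_i\rangle\langle g(x_k)-z_k,e_i\rangle>0$ whenever $\langle\lambda,e_i\rangle\ne0$.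
   Context: $\nabla g(\bar x)$ is the derivative (linear map), $\nabla g(\bar x)^*$ its adjoint. $\widehat{\mathcal N}_D$ regular normal cone, $\mathcal N_D(y;v)$ directional limiting normal cone (all limits of $\eta_k\in\widehat{\mathcal N}_D(y+t_kv_k)$ with $v_k\to v$, $t_k\searrow0$). Quasi-normality in direction $u$ at $(\bar x,\bar y)$ w.r.t. $\{e_i\}$: there is no nonzero $\lambda$ with $0\in D^*\Phi((\bar x,\bar y);(u,0))(\lambda)$ (directional limiting coderivative, i.e. $(0,-\lambda)\in\mathcal N_{\operatorname{gph}\Phi}((\bar x,\bar y);(u,0))$) for which there exist $\{(x_k,y_k)\}\subset\operatorname{gph}\Phi$ with $x_k\ne\bar x$, $\{\lambda_k\}\subset\mathbb Y$, $\{\eta_k\}\subset\mathbb X$ with $x_k\to\bar x$, $y_k\to\bar y$, $\lambda_k\to\lambda$, $\eta_k\to0$, $(x_k-\bar x)/\|x_k-\bar x\|\to u$, $(y_k-\bar y)/\|x_k-\bar x\|\to0$, $\eta_k\in\widehat D^*\Phi(x_k,y_k)(\lambda_k)$ (regular coderivative), and $\langle\lambda,e_i\rangle\langle y_k-\bar y,e_i\rangle>0$ whenever $\langle\lambda,e_i\rangle\ne0$. *)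

(* Finite-dimensional Euclidean spaces X, Y are modelled as row vectors
   'rV[R]_n, 'rV[R]_m with the standard dot product and Euclidean norm.
   Sequence convergence uses the library topology on matrices
   (equivalent to the Euclidean one). *)
From HB Require Import structures.
From mathcomp Require Import all_boot all_order all_algebra.
From mathcomp Require Import all_classical all_reals all_analysis.
Set Implicit Arguments. Unset Strict Implicit. Unset Printing Implicit Defensive.
Import Order.TTheory GRing.Theory Num.Theory.
Import numFieldNormedType.Exports.
Local Open Scope classical_set_scope.
Local Open Scope ring_scope.

Section Defs.
Variable R : realType.

Definition dotv (k : nat) (u v : 'rV[R]_k) : R := (u *m v^T) 0 0.

Definition enorm (k : nat) (v : 'rV[R]_k) : R := Num.sqrt (dotv v v).

Definition rnormal (k : nat) (C : set 'rV[R]_k) (y : 'rV[R]_k) : set 'rV[R]_k :=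
  [set eta | C y /\
    forall eps : R, 0 < eps -> exists2 delta : R, 0 < delta &
      forall y', C y' -> enorm (y' - y) < delta ->
        dotv eta (y' - y) <= eps * enorm (y' - y)].

Definition dlnormal (k : nat) (C : set 'rV[R]_k) (y v : 'rV[R]_k) : set 'rV[R]_k :=
  [set eta | exists (t : nat -> R) (vk etak : nat -> 'rV[R]_k),
    [/\ (forall j, 0 < t j), t @ \oo --> (0 : R), vk @ \oo --> v,
        etak @ \oo --> eta &
        forall j, rnormal C (y + t j *: vk j) (etak j)]].

(* the graph of a set-valued map X => Y, embedded in R^(n+m) via row_mx *)
Definition gph_set (n m : nat) (G : 'rV[R]_n -> 'rV[R]_m -> Prop) : set 'rV[R]_(n + m) :=
  [set z | G (lsubmx z) (rsubmx z)].

Definition rcoder (n m : nat) (G : 'rV[R]_n -> 'rV[R]_m -> Prop)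
  (x : 'rV[R]_n) (y lam : 'rV[R]_m) : set 'rV[R]_n :=
  [set eta | rnormal (gph_set G) (row_mx x y) (row_mx eta (- lam))].

Definition dlcoder (n m : nat) (G : 'rV[R]_n -> 'rV[R]_m -> Prop)
  (x : 'rV[R]_n) (y : 'rV[R]_m) (u : 'rV[R]_n) (v lam : 'rV[R]_m) : set 'rV[R]_n :=
  [set eta | dlnormal (gph_set G) (row_mx x y) (row_mx u v) (row_mx eta (- lam))].

Definition quasi_normal_dir (n m : nat) (G : 'rV[R]_n -> 'rV[R]_m -> Prop)
  (xb : 'rV[R]_n) (yb : 'rV[R]_m) (u : 'rV[R]_n) (e : 'I_m -> 'rV[R]_m) : Prop :=
  ~ exists lam : 'rV[R]_m,
      [/\ lam != 0, dlcoder G xb yb u 0 lam 0 &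
        exists (xk : nat -> 'rV[R]_n) (yk lamk : nat -> 'rV[R]_m) (etak : nat -> 'rV[R]_n),
          (forall k, G (xk k) (yk k) /\ xk k != xb) /\
          xk @ \oo --> xb /\ yk @ \oo --> yb /\ lamk @ \oo --> lam /\
          etak @ \oo --> (0 : 'rV[R]_n) /\
          (fun k => (enorm (xk k - xb))^-1 *: (xk k - xb)) @ \oo --> u /\
          (fun k => (enorm (xk k - xb))^-1 *: (yk k - yb)) @ \oo --> (0 : 'rV[R]_m) /\
          (forall k, rcoder G (xk k) (yk k) (lamk k) (etak k)) /\
          (forall k (i : 'I_m), dotv lam (e i) != 0 ->
             0 < dotv lam (e i) * dotv (yk k - yb) (e i))].

Definition C1 (n m : nat) (g : 'rV[R]_n -> 'rV[R]_m) : Prop :=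
  (forall x, differentiable g x) /\
  continuous (fun x => lin1_mx ('d g x)).

Definition adjoint (n m : nat) (L : 'rV[R]_n -> 'rV[R]_m) (lam : 'rV[R]_m) : 'rV[R]_n :=
  lam *m (lin1_mx L)^T.

(* the map Phi(x) = g(x) - D, as its graph relation *)
Definition PhiG (n m : nat) (g : 'rV[R]_n -> 'rV[R]_m) (D : set 'rV[R]_m)
  (x : 'rV[R]_n) (y : 'rV[R]_m) : Prop := D (g x - y).

End Defs.

From HB Require Import structures.
From mathcomp Require Import all_boot all_order all_algebra.
From mathcomp Require Import all_classical all_reals all_analysis.
From mathcomp Require Import ring lra.
Import Order.TTheory GRing.Theory Num.Theory.
Import numFieldNormedType.Exports.
Local Open Scope classical_set_scope.
Local Open Scope ring_scope.
Set Implicit Arguments. Unset Strict Implicit. Unset Printing Implicit Defensive.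

(* The graph of Phi is the preimage of D under F(x, y) = g x - y, whose derivative
   (h, k) |-> 'd g x h - k has adjoint lam |-> (('d g x)^* lam, -lam).  Hence the regular
   normals to gph Phi at (x, y) are exactly the pairs (('d g x)^* lam, -lam) with lam a
   regular normal to D at g x - y: one inclusion is the chain rule for regular normals, the
   other follows by testing the normal against the tangent curve
   t |-> (x + t z, y + g (x + t z) - g x) of the graph.  Passing to the limit along
   t_k -> 0+ turns the directional limiting coderivative condition into
   lam \in N_D(g xb; 'd g xb u) with ('d g xb)^* lam = 0, and the substitution
   y_k = g x_k - z_k matches the sequences of the two conditions term by term, the
   difference quotients (g x_k - g xb) / |x_k - xb| converging to 'd g xb u. *)

Section Euclidean.
Variables (R : realType) (k : nat).
Implicit Types (u v w : 'rV[R]_k) (a : R).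

Lemma dotvE u v : dotv u v = \sum_i u 0 i * v 0 i.
Proof. by rewrite /dotv mxE; apply: eq_bigr => i _; rewrite mxE. Qed.

Lemma dotvC u v : dotv u v = dotv v u.
Proof. by rewrite !dotvE; apply: eq_bigr => i _; rewrite mulrC. Qed.

Lemma dotvDl u v w : dotv (u + v) w = dotv u w + dotv v w.
Proof. by rewrite /dotv mulmxDl mxE. Qed.

Lemma dotvZl a u w : dotv (a *: u) w = a * dotv u w.
Proof. by rewrite /dotv -scalemxAl mxE. Qed.

Lemma dotvNl u w : dotv (- u) w = - dotv u w.
Proof. by rewrite -scaleN1r dotvZl mulN1r. Qed.

Lemma dotvBl u v w : dotv (u - v) w = dotv u w - dotv v w.
Proof. by rewrite dotvDl dotvNl. Qed.

Lemma dotvDr u v w : dotv w (u + v) = dotv w u + dotv w v.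
Proof. by rewrite dotvC dotvDl !(dotvC w). Qed.

Lemma dotvZr a u w : dotv w (a *: u) = a * dotv w u.
Proof. by rewrite dotvC dotvZl dotvC. Qed.

Lemma dotvNr u w : dotv w (- u) = - dotv w u.
Proof. by rewrite dotvC dotvNl dotvC. Qed.

Lemma dotvBr u v w : dotv w (u - v) = dotv w u - dotv w v.
Proof. by rewrite dotvDr dotvNr. Qed.

Lemma dotv0r w : dotv w 0 = 0.
Proof. by rewrite -(scale0r 0) dotvZr mul0r. Qed.

Lemma dotvv_ge0 v : 0 <= dotv v v.
Proof. by rewrite dotvE; apply: sumr_ge0 => i _; rewrite -expr2 sqr_ge0. Qed.

Lemma dotvv_eq0 v : (dotv v v == 0) = (v == 0).
Proof.
apply/idP/eqP => [|->]; last by rewrite dotv0r.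
rewrite dotvE psumr_eq0 => [/allP v0|i _]; last by rewrite -expr2 sqr_ge0.
apply/rowP => i; rewrite mxE; apply/eqP.
by rewrite -sqrf_eq0 expr2; apply: v0; rewrite mem_index_enum.
Qed.

Lemma enorm_ge0 v : 0 <= enorm v.
Proof. exact: sqrtr_ge0. Qed.

Lemma enorm0 : enorm (0 : 'rV[R]_k) = 0.
Proof. by rewrite /enorm dotv0r sqrtr0. Qed.

Lemma enorm_sqr v : enorm v ^+ 2 = dotv v v.
Proof. by rewrite sqr_sqrtr // dotvv_ge0. Qed.

Lemma enorm_eq0 v : (enorm v == 0) = (v == 0).
Proof. by rewrite -sqrf_eq0 enorm_sqr dotvv_eq0. Qed.

Lemma enormZ a v : enorm (a *: v) = `|a| * enorm v.
Proof.
by rewrite /enorm dotvZl dotvZr mulrA sqrtrM ?sqr_ge0 // -expr2 sqrtr_sqr.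
Qed.

Lemma enormN v : enorm (- v) = enorm v.
Proof. by rewrite -scaleN1r enormZ normrN1 mul1r. Qed.

Lemma CauchySchwarz_dotv u v : dotv u v <= enorm u * enorm v.
Proof.
have [->|u0] := eqVneq u 0; first by rewrite dotvC dotv0r enorm0 mul0r.
have [->|v0] := eqVneq v 0; first by rewrite dotv0r enorm0 mulr0.
have uv_gt0 : 0 < enorm u * enorm v.
  by rewrite mulr_gt0 // lt_def enorm_ge0 enorm_eq0 ?u0 ?v0.
have := dotvv_ge0 (enorm v *: u - enorm u *: v).
rewrite !(dotvBl, dotvBr, dotvZl, dotvZr) -!enorm_sqr (dotvC v u).
move: uv_gt0; set a := enorm u; set b := enorm v; set c := dotv u v => ab0 H.
rewrite -(ler_pM2l ab0); nra.
Qed.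

Lemma enormD u v : enorm (u + v) <= enorm u + enorm v.
Proof.
rewrite -(ler_pXn2r (isT : (0 < 2)%N)) ?nnegrE ?addr_ge0 ?enorm_ge0 //.
rewrite enorm_sqr !(dotvDl, dotvDr) sqrrD -!enorm_sqr (dotvC v u).
have := CauchySchwarz_dotv u v; lra.
Qed.

Lemma norm_le_enorm v : `|v| <= enorm v.
Proof.
rewrite [leLHS]/Num.Def.normr /= mx_normrE.
apply: bigmax_le => [|[i j] _]; first exact: enorm_ge0.
rewrite (ord1 i) /= -(sqrtr_sqr (v 0 j)) ler_wsqrtr // dotvE (bigD1 j) //= -expr2 lerDl.
by apply: sumr_ge0 => l _; rewrite -expr2 sqr_ge0.
Qed.

Lemma enorm_le_norm v : enorm v <= k%:R * `|v|.
Proof.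
rewrite -(ler_pXn2r (isT : (0 < 2)%N)) ?nnegrE ?enorm_ge0 ?mulr_ge0 //.
rewrite enorm_sqr dotvE exprMn.
apply: le_trans (_ : \sum_(i < k) `|v| ^+ 2 <= _).
  apply: ler_sum => i _; rewrite -expr2 -real_normK ?num_real //.
  rewrite lerXn2r ?nnegrE //; rewrite [leRHS]/Num.Def.normr /= mx_normrE.
  exact: (le_bigmax _ _ (0, i)).
rewrite sumr_const card_ord -[_ *+ k]mulr_natl ler_wpM2r ?sqr_ge0 //.
by rewrite -natrX ler_nat; case: (k) => // l; rewrite expnS leq_pmulr.
Qed.

End Euclidean.

Section RowBlocks.
Variables (R : realType) (n m : nat).
Implicit Types (a c : 'rV[R]_n) (b d : 'rV[R]_m).

Lemma dotv_row_mx a b c d : dotv (row_mx a b) (row_mx c d) = dotv a c + dotv b d.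
Proof. by rewrite /dotv tr_row_mx mul_row_col mxE. Qed.

Lemma enorm_row_mxl a b : enorm a <= enorm (row_mx a b).
Proof.
rewrite -(ler_pXn2r (isT : (0 < 2)%N)) ?nnegrE ?enorm_ge0 //.
by rewrite !enorm_sqr dotv_row_mx lerDl dotvv_ge0.
Qed.

Lemma enorm_row_mxr a b : enorm b <= enorm (row_mx a b).
Proof.
rewrite -(ler_pXn2r (isT : (0 < 2)%N)) ?nnegrE ?enorm_ge0 //.
by rewrite !enorm_sqr dotv_row_mx lerDr dotvv_ge0.
Qed.

Lemma enorm_lsubmx (w : 'rV[R]_(n + m)) : enorm (lsubmx w) <= enorm w.
Proof. by rewrite -{2}(hsubmxK w) enorm_row_mxl. Qed.

Lemma enorm_rsubmx (w : 'rV[R]_(n + m)) : enorm (rsubmx w) <= enorm w.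
Proof. by rewrite -{2}(hsubmxK w) enorm_row_mxr. Qed.

Lemma enorm_row0mx b : enorm (row_mx (0 : 'rV[R]_n) b) = enorm b.
Proof. by rewrite /enorm dotv_row_mx dotv0r add0r. Qed.

End RowBlocks.

Section MatrixSequences.
Variable R : realType.
Implicit Types (p q r : nat).

Lemma cvg_mxP p q (A : nat -> 'M[R]_(p, q)) (B : 'M[R]_(p, q)) :
  A @ \oo --> B <-> forall i j, (fun k => A k i j) @ \oo --> B i j.
Proof.
split=> [AB i j|AB]; first exact: (continuous_cvg _ (@coord_continuous R p q i j B) AB).
apply/cvgrPdist_le => e e0.
have : \forall k \near \oo, forall ij : 'I_p * 'I_q, `|B ij.1 ij.2 - A k ij.1 ij.2| <= e.
  by apply: filter_forall => ij; exact: (cvgrPdist_le _ _).1 (AB ij.1 ij.2) e e0.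
apply: filter_app; near=> k => ABk.
rewrite [leLHS]/Num.Def.normr /= mx_normrE.
by apply: bigmax_le => [|[i j] _]; [exact: ltW | rewrite !mxE; exact: ABk (i, j)].
Unshelve. all: by end_near. Qed.

Lemma cvg_mulmx p q r (A : nat -> 'M[R]_(p, q)) (B : nat -> 'M[R]_(q, r))
  (A0 : 'M[R]_(p, q)) (B0 : 'M[R]_(q, r)) :
  A @ \oo --> A0 -> B @ \oo --> B0 -> (fun k => A k *m B k) @ \oo --> A0 *m B0.
Proof.
move=> /cvg_mxP AA0 /cvg_mxP BB0; apply/cvg_mxP => i j.
rewrite mxE; under eq_cvg do rewrite mxE.
apply: cvg_big => // [|l _]; first exact: add_continuous.
exact: cvgM.
Qed.

Lemma cvg_trmx p q (A : nat -> 'M[R]_(p, q)) (A0 : 'M[R]_(p, q)) :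
  A @ \oo --> A0 -> (fun k => (A k)^T) @ \oo --> A0^T.
Proof.
move=> /cvg_mxP AA0; apply/cvg_mxP => i j.
rewrite mxE; under eq_cvg do rewrite mxE; exact: AA0.
Qed.

Lemma cvg_row_mxP p q (a : nat -> 'rV[R]_p) (b : nat -> 'rV[R]_q)
  (a0 : 'rV[R]_p) (b0 : 'rV[R]_q) :
  (fun k => row_mx (a k) (b k)) @ \oo --> row_mx a0 b0 <->
  a @ \oo --> a0 /\ b @ \oo --> b0.
Proof.
split=> [ab|[aa0 bb0]].
  split.
    have := cvg_comp _ _ ab (@continuous_lsubmx R 1 p q _).
    by rewrite row_mxKl; under eq_cvg do rewrite /= row_mxKl.
  have := cvg_comp _ _ ab (@continuous_rsubmx R 1 p q _).
  by rewrite row_mxKr; under eq_cvg do rewrite /= row_mxKr.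
move/cvg_mxP: aa0 => aa0; move/cvg_mxP: bb0 => bb0; apply/cvg_mxP => i j.
rewrite -(splitK j); case: (fintype.split j) => l /=.
  by rewrite row_mxEl; under eq_cvg do rewrite row_mxEl; exact: aa0.
by rewrite row_mxEr; under eq_cvg do rewrite row_mxEr; exact: bb0.
Qed.

Lemma cvg_dotv p (u v : nat -> 'rV[R]_p) (u0 v0 : 'rV[R]_p) :
  u @ \oo --> u0 -> v @ \oo --> v0 -> (fun k => dotv (u k) (v k)) @ \oo --> dotv u0 v0.
Proof. by move=> uu0 vv0; apply/(cvg_mxP _ _).1/cvg_mulmx/cvg_trmx. Qed.

Lemma cvg_enorm p (v : nat -> 'rV[R]_p) (v0 : 'rV[R]_p) :
  v @ \oo --> v0 -> (fun k => enorm (v k)) @ \oo --> enorm v0.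
Proof. by move=> vv0; exact: cvg_comp _ _ (cvg_dotv vv0 vv0) (@sqrt_continuous R _). Qed.

End MatrixSequences.

Section Differentiation.
Variables (R : realType) (n m : nat).
Implicit Types (g : 'rV[R]_n -> 'rV[R]_m) (x : 'rV[R]_n).

Lemma dotv_adjoint (L : {linear 'rV[R]_n -> 'rV[R]_m}) (lam : 'rV[R]_m) h :
  dotv (adjoint L lam) h = dotv lam (L h).
Proof. by rewrite /adjoint /dotv -mul_rV_lin1 trmx_mul mulmxA. Qed.

Lemma cvg_adjoint g (xk : nat -> 'rV[R]_n) x (mu : nat -> 'rV[R]_m) mu0 :
  C1 g -> xk @ \oo --> x -> mu @ \oo --> mu0 ->
  (fun k => adjoint ('d g (xk k)) (mu k)) @ \oo --> adjoint ('d g x) mu0.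
Proof.
move=> [_ dg_cont] xkx mumu0; apply: cvg_mulmx mumu0 (cvg_trmx _).
exact: cvg_comp _ _ xkx (dg_cont x).
Qed.

Lemma linear_enorm_lipschitz (L : {linear 'rV[R]_n -> 'rV[R]_m}) :
  continuous L -> exists2 K, 0 <= K & forall h, enorm (L h) <= K * enorm h.
Proof.
move=> /linear_lipschitz[K K0 LK]; exists (m%:R * K) => [|h].
  by rewrite mulr_ge0 // ltW.
rewrite -mulrA; apply: le_trans (enorm_le_norm _) (ler_wpM2l _ _) => //.
by apply: le_trans (LK h) (ler_wpM2l _ _); [exact: ltW | exact: norm_le_enorm].
Qed.

Lemma diff_enorm_littleo g x : differentiable g x ->
  forall eps, 0 < eps -> exists2 d, 0 < d & forall h, enorm h < d ->
    enorm (g (x + h) - g x - 'd g x h) <= eps * enorm h.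
Proof.
move=> dg eps eps0; have m1_gt0 : 0 < m%:R + 1 :> R by rewrite ltr_wpDl.
have /eqaddoP/(_ _ (divr_gt0 eps0 m1_gt0))/nbhs_norm0P[d d0 Hd] := diff_locally dg.
exists d => // h hd.
have /= := Hd h (le_lt_trans (norm_le_enorm h) hd).
rewrite [x + h]addrC opprD addrA => rh.
apply: le_trans (enorm_le_norm _) _; apply: le_trans (ler_wpM2l (ler0n _ m) rh) _.
rewrite mulrA; apply: ler_pM => //; last exact: norm_le_enorm.
  by rewrite mulr_ge0 // divr_ge0 // ltW.
by rewrite mulrCA ger_pMr // ler_pdivrMr // mul1r lerDl.
Qed.

Lemma cvg_diff_quotient g x (t : nat -> R) (a : nat -> 'rV[R]_n) a0 :
  differentiable g x -> (forall j, 0 < t j) -> t @ \oo --> 0 -> a @ \oo --> a0 ->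
  (fun j => (t j)^-1 *: (g (x + t j *: a j) - g x)) @ \oo --> 'd g x a0.
Proof.
move=> dg t_gt0 t0 aa0.
pose rem j := (t j)^-1 *: (g (x + t j *: a j) - g x - 'd g x (t j *: a j)).
have -> : (fun j => (t j)^-1 *: (g (x + t j *: a j) - g x)) =
    (fun j => 'd g x (a j) + rem j).
  apply/funext => j; rewrite /rem linearZ /= [in RHS]scalerBr scalerA.
  by rewrite mulVf ?gt_eqF // scale1r subrKC.
have dg_cont : continuous ('d g x) := diff_continuous dg.
rewrite -[X in _ --> X]addr0; apply: cvgD; first exact: (continuous_cvg _ (dg_cont a0) aa0).
apply/cvgr0Pnorm_lt => e e0; have c_gt0 : 0 < enorm a0 + 1 by rewrite ltr_wpDl ?enorm_ge0.
have [d d0 Hd] := diff_enorm_littleo dg (divr_gt0 e0 c_gt0).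
have ta0 : (fun j => t j *: a j) @ \oo --> (0 : 'rV[R]_n) by rewrite -(scale0r a0); exact: cvgZ.
have small : \forall j \near \oo, enorm (t j *: a j) < d.
  by have := cvgr_lt _ (cvg_enorm ta0); rewrite enorm0; apply.
have bounded : \forall j \near \oo, enorm (a j) < enorm a0 + 1.
  by have := cvgr_lt _ (cvg_enorm aa0); apply; rewrite ltrDl.
near=> j; have tj := t_gt0 j.
have sj : enorm (t j *: a j) < d by near: j.
have bj : enorm (a j) < enorm a0 + 1 by near: j.
rewrite (le_lt_trans (norm_le_enorm _)) // /rem enormZ ger0_norm ?invr_ge0 ?(ltW tj) //.
rewrite ltr_pdivrMl // (le_lt_trans (Hd _ sj)) // enormZ ger0_norm ?(ltW tj) //.
by rewrite mulrCA ltr_pM2l // mulrAC ltr_pdivrMr // ltr_pM2l.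
Unshelve. all: by end_near. Qed.

Lemma cvg_diff_quotient_seq g x (xk : nat -> 'rV[R]_n) u :
  differentiable g x -> (forall k, xk k != x) -> xk @ \oo --> x ->
  (fun k => (enorm (xk k - x))^-1 *: (xk k - x)) @ \oo --> u ->
  (fun k => (enorm (xk k - x))^-1 *: (g (xk k) - g x)) @ \oo --> 'd g x u.
Proof.
move=> dg xk_neq xkx dir_u; pose s k := enorm (xk k - x).
have s_gt0 k : 0 < s k by rewrite lt_def enorm_ge0 enorm_eq0 subr_eq0 xk_neq.
have s0 : s @ \oo --> 0.
  rewrite -(enorm0 R n) -(subrr x); apply: cvg_enorm; apply: cvgB => //; exact: cvg_cst.
have := cvg_diff_quotient dg s_gt0 s0 dir_u.
by under eq_cvg do rewrite scalerA mulfV ?gt_eqF // scale1r subrKC.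
Qed.

End Differentiation.

Section RegularNormals.
Variable R : realType.

Lemma rnormal_tangent_le0 k (C : set 'rV[R]_k) y eta
    (t : nat -> R) (v : nat -> 'rV[R]_k) v0 :
  rnormal C y eta -> (forall j, 0 < t j) -> t @ \oo --> 0 ->
  (forall j, C (y + t j *: v j)) -> v @ \oo --> v0 -> dotv eta v0 <= 0.
Proof.
move=> [_ reg] t_gt0 t0 Cv vv0.
have dot_le eps : 0 < eps -> dotv eta v0 <= eps * enorm v0.
  move=> eps0; have [d d0 Hd] := reg eps eps0.
  have tv0 : (fun j => t j *: v j) @ \oo --> (0 : 'rV[R]_k).
    by rewrite -(scale0r v0); exact: cvgZ.
  have small : \forall j \near \oo, enorm (t j *: v j) < d.
    by have := cvgr_lt _ (cvg_enorm tv0); rewrite enorm0; apply.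
  apply: (ler_cvg_to (cvg_dotv (cvg_cst eta) vv0) (cvgM (cvg_cst eps) (cvg_enorm vv0))).
  near=> j; have tj := t_gt0 j; have sj : enorm (t j *: v j) < d by near: j.
  have := Hd _ (Cv j); rewrite addrC addKr => /(_ sj).
  by rewrite dotvZr enormZ ger0_norm ?(ltW tj) // mulrCA ler_pM2l.
apply/ler_addgt0Pr => e e0; rewrite add0r.
have c_gt0 : 0 < enorm v0 + 1 by rewrite ltr_wpDl ?enorm_ge0.
apply: le_trans (dot_le _ (divr_gt0 e0 c_gt0)) _.
by rewrite mulrAC ler_pdivrMr // ler_pM2l // lerDl.
Unshelve. all: by end_near. Qed.

Lemma rnormal_preimage k l (F L : 'rV[R]_k -> 'rV[R]_l) (D : set 'rV[R]_l) w eta lam K :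
  0 <= K -> (forall v, enorm (L v) <= K * enorm v) ->
  (forall eps, 0 < eps -> exists2 d, 0 < d & forall w', enorm (w' - w) < d ->
     enorm (F w' - F w - L (w' - w)) <= eps * enorm (w' - w)) ->
  (forall v, dotv eta v = dotv lam (L v)) ->
  rnormal D (F w) lam -> rnormal (F @^-1` D) w eta.
Proof.
move=> K0 LK Fdiff etaE [DFw reg]; split=> // eps eps0.
have c_gt0 : 0 < K + 1 by rewrite ltr_wpDl.
have l_gt0 : 0 < enorm lam + 1 by rewrite ltr_wpDl ?enorm_ge0.
have [d1 d1_gt0 H1] := reg (eps / (2 * (K + 1))) (divr_gt0 eps0 (mulr_gt0 (ltr0Sn _ 1) c_gt0)).
pose e2 := Num.min 1 (eps / (2 * (enorm lam + 1))).
have e2_gt0 : 0 < e2 by rewrite lt_min ltr01 divr_gt0 // mulr_gt0.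
have [d2 d2_gt0 H2] := Fdiff e2 e2_gt0.
exists (Num.min d2 (d1 / (K + 1))) => [|w' DFw']; first by rewrite lt_min d2_gt0 divr_gt0.
rewrite lt_min => /andP[wd2 wd1]; set E := enorm (w' - w) in wd1 wd2 *.
have E0 : 0 <= E := enorm_ge0 _.
set r := F w' - F w - L (w' - w) in H2.
have rE : enorm r <= e2 * E := H2 _ wd2.
have Finc : F w' - F w = L (w' - w) + r by rewrite /r subrKC.
have FE : enorm (F w' - F w) <= (K + 1) * E.
  rewrite Finc; apply: le_trans (enormD _ _) _.
  have : e2 * E <= E by rewrite ler_piMl // ge_min lexx.
  by have := LK (w' - w); rewrite -/E; lra.
have := H1 _ DFw' (le_lt_trans FE _); rewrite mulrC -ltr_pdivlMr // => /(_ wd1).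
rewrite Finc dotvDr etaE.
have A : eps / (2 * (K + 1)) * enorm (F w' - F w) <= eps / 2 * E.
  apply: le_trans (ler_wpM2l _ FE) _; first by rewrite divr_ge0 // ?mulr_ge0 ?ltW.
  by have -> : eps / (2 * (K + 1)) * ((K + 1) * E) = eps / 2 * E by field; rewrite gt_eqF.
have B : - dotv lam r <= eps / 2 * E.
  rewrite -dotvNl (le_trans (CauchySchwarz_dotv _ _)) // enormN.
  apply: le_trans (ler_wpM2l (enorm_ge0 _) rE) _; rewrite mulrA ler_wpM2r //.
  have : e2 <= eps / (2 * (enorm lam + 1)) by rewrite ge_min lexx orbT.
  move=> /(ler_wpM2l (enorm_ge0 lam))/le_trans; apply.
  rewrite mulrA ler_pdivrMr ?mulr_gt0 //.
  have -> : eps / 2 * (2 * (enorm lam + 1)) = eps * (enorm lam + 1) by field.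
  by rewrite mulrC ler_pM2l // lerDl.
rewrite -Finc; lra.
Qed.

End RegularNormals.

Section GraphOfPhi.
Variables (R : realType) (n m : nat) (g : 'rV[R]_n -> 'rV[R]_m) (D : set 'rV[R]_m).
Implicit Types (x eta : 'rV[R]_n) (y lam : 'rV[R]_m).

Lemma gph_PhiG_row_mx x y : gph_set (PhiG g D) (row_mx x y) = D (g x - y).
Proof. by rewrite /gph_set /PhiG /= row_mxKl row_mxKr. Qed.

Lemma rnormal_gph_PhiG_D x y eta lam :
  rnormal (gph_set (PhiG g D)) (row_mx x y) (row_mx eta (- lam)) ->
  rnormal D (g x - y) lam.
Proof.
rewrite /rnormal /= gph_PhiG_row_mx => -[Dxy reg]; split=> // eps /reg[d d0 Hd].
exists d => // z Dz zd.
have inc : row_mx x (g x - z) - row_mx x y = row_mx 0 (- (z - (g x - y))).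
  by rewrite opp_row_mx add_row_mx subrr !opprB addrAC.
have := Hd (row_mx x (g x - z)); rewrite gph_PhiG_row_mx subKr inc enorm_row0mx enormN.
by rewrite dotv_row_mx dotv0r add0r dotvNl dotvNr opprK; apply.
Qed.

Lemma rnormal_gph_PhiG_adjoint x y eta lam : differentiable g x ->
  rnormal (gph_set (PhiG g D)) (row_mx x y) (row_mx eta (- lam)) ->
  eta = adjoint ('d g x) lam.
Proof.
move=> dg N; apply/eqP; rewrite -subr_eq0 -dotvv_eq0 eq_le dotvv_ge0 andbT.
set z := eta - adjoint ('d g x) lam.
(* the tangent curve t |-> (x + t z, y + g (x + t z) - g x) stays in the graph *)
pose q j := (harmonic j)^-1 *: (g (x + harmonic j *: z) - g x).
have -> : dotv z z = dotv (row_mx eta (- lam)) (row_mx z ('d g x z)).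
  by rewrite dotv_row_mx dotvNl -dotv_adjoint -dotvBl.
apply: (rnormal_tangent_le0 N (@harmonic_gt0 R) cvg_harmonic (v := fun j => row_mx z (q j))).
  move=> j; case: N; rewrite gph_PhiG_row_mx => Dxy _.
  rewrite scale_row_mx add_row_mx gph_PhiG_row_mx /q scalerA mulfV ?gt_eqF ?harmonic_gt0 //.
  by rewrite scale1r (addrC y) opprD addrA subKr.
apply/cvg_row_mxP; split; first exact: cvg_cst.
by apply: cvg_diff_quotient => //; [exact: harmonic_gt0 | exact: cvg_harmonic | exact: cvg_cst].
Qed.

Lemma rnormal_gph_PhiG x y lam : differentiable g x -> rnormal D (g x - y) lam ->
  rnormal (gph_set (PhiG g D)) (row_mx x y) (row_mx (adjoint ('d g x) lam) (- lam)).
Proof.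
move=> dg N; have [K K0 HK] := @linear_enorm_lipschitz R n m ('d g x) (diff_continuous dg).
pose F w := g (@lsubmx R 1 n m w) - rsubmx w.
pose L v := 'd g x (@lsubmx R 1 n m v) - rsubmx v.
have FE : F (row_mx x y) = g x - y by rewrite /F row_mxKl row_mxKr.
apply: (@rnormal_preimage R _ _ F L D _ _ lam (K + 1)); rewrite ?FE //.
- by rewrite addr_ge0.
- move=> v; rewrite /L mulrDl mul1r; apply: le_trans (enormD _ _) _; rewrite enormN.
  apply: lerD; last exact: enorm_rsubmx.
  exact: le_trans (HK _) (ler_wpM2l K0 (enorm_lsubmx _)).
- move=> eps eps0; have [d d0 Hd] := diff_enorm_littleo dg eps0.
  exists d => // w' wd.
  have lE : lsubmx (w' - row_mx x y) = lsubmx w' - x by rewrite linearB /= row_mxKl.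
  have rE : rsubmx (w' - row_mx x y) = rsubmx w' - y by rewrite linearB /= row_mxKr.
  have dh := le_lt_trans (enorm_lsubmx _) wd; rewrite lE in dh.
  rewrite /F /L lE rE (opprB ('d g x _)) addrA (addrAC (_ - rsubmx w')) subrKA opprB subrKA.
  apply: le_trans (_ : eps * enorm (lsubmx w' - x) <= _).
    by have := Hd _ dh; rewrite subrKC.
  by apply: ler_wpM2l; [exact: ltW | rewrite -lE; exact: enorm_lsubmx].
- by move=> v; rewrite -{1}(hsubmxK v) dotv_row_mx dotv_adjoint dotvNl dotvBr.
Qed.

Lemma rcoder_PhiG x y lam eta : differentiable g x ->
  rcoder (PhiG g D) x y lam eta <->
  rnormal D (g x - y) lam /\ eta = adjoint ('d g x) lam.
Proof.
move=> dg; split=> [N|[N ->]]; last exact: rnormal_gph_PhiG.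
by split; [exact: rnormal_gph_PhiG_D N | exact: rnormal_gph_PhiG_adjoint dg N].
Qed.

Hypothesis g_C1 : C1 g.

Lemma dlcoder_PhiG_dlnormal x y u v lam eta :
  dlcoder (PhiG g D) x y u v lam eta ->
  dlnormal D (g x - y) ('d g x u - v) lam /\ eta = adjoint ('d g x) lam.
Proof.
move=> [t [w [etak [t_gt0 t0 ww0 etak_eta N]]]]; have dg z := g_C1.1 z.
pose a j := lsubmx (w j); pose b j := rsubmx (w j).
pose eta' j := lsubmx (etak j); pose mu j := - rsubmx (etak j).
have [aa0 bb0] : a @ \oo --> u /\ b @ \oo --> v.
  by apply/cvg_row_mxP; under eq_cvg do rewrite hsubmxK.
have /cvg_row_mxP[eta'_eta /cvgN mu_lam] :
    (fun j => row_mx (eta' j) (rsubmx (etak j))) @ \oo --> row_mx eta (- lam).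
  by under eq_cvg do rewrite hsubmxK.
have {}mu_lam : mu @ \oo --> lam by rewrite -[lam]opprK; exact: mu_lam.
have Nj j : rcoder (PhiG g D) (x + t j *: a j) (y + t j *: b j) (mu j) (eta' j).
  by rewrite /rcoder /= -add_row_mx -scale_row_mx hsubmxK opprK hsubmxK.
split.
  exists t, (fun j => (t j)^-1 *: (g (x + t j *: a j) - g x) - b j), mu; split => //.
    by apply: cvgB bb0; exact: cvg_diff_quotient.
  move=> j; have [Nz _] := (rcoder_PhiG _ _ _ (dg _)).1 (Nj j).
  by rewrite scalerBr scalerA mulfV ?gt_eqF // scale1r addrA (addrAC (g x)) subrKC -addrA -opprD.
have xj : (fun j => x + t j *: a j) @ \oo --> x.
  by rewrite -{2}(addr0 x) -(scale0r u); apply: cvgD (cvg_cst _) (cvgZ _ _).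
have eta'E : eta' = fun j => adjoint ('d g (x + t j *: a j)) (mu j).
  by apply/funext => j; exact: ((rcoder_PhiG _ _ _ (dg _)).1 (Nj j)).2.
rewrite eta'E in eta'_eta.
exact: (cvg_unique (@norm_hausdorff _ _) eta'_eta (cvg_adjoint g_C1 xj mu_lam)).
Qed.

Lemma dlnormal_dlcoder_PhiG x y u v lam :
  dlnormal D (g x - y) ('d g x u - v) lam ->
  dlcoder (PhiG g D) x y u v lam (adjoint ('d g x) lam).
Proof.
move=> [t [w [mu [t_gt0 t0 ww0 mu_lam N]]]]; have dg z := g_C1.1 z.
pose b j := (t j)^-1 *: (g (x + t j *: u) - g x) - w j.
have bv : b @ \oo --> v.
  rewrite -[v](subKr ('d g x u)); apply: cvgB ww0.
  exact: cvg_diff_quotient (cvg_cst _).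
have xj : (fun j => x + t j *: u) @ \oo --> x.
  by rewrite -{2}(addr0 x) -(scale0r u); apply: cvgD (cvg_cst _) (cvgZ _ (cvg_cst _)).
exists t, (fun j => row_mx u (b j)),
  (fun j => row_mx (adjoint ('d g (x + t j *: u)) (mu j)) (- mu j)); split => //.
- by apply/cvg_row_mxP; split; [exact: cvg_cst | exact: bv].
- by apply/cvg_row_mxP; split; [exact: cvg_adjoint | exact: cvgN].
move=> j; rewrite scale_row_mx add_row_mx; apply: rnormal_gph_PhiG (dg _) _.
rewrite /b scalerBr scalerA mulfV ?gt_eqF // scale1r.
by rewrite addrCA opprD addrA subKr opprB addrA addrAC; exact: N.
Qed.

End GraphOfPhi.

(* [quasi_normal_dir G xb yb u e] unfolds to [~ exists lam, qn_multiplier G xb yb u e lam]. *)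
Definition qn_multiplier (R : realType) (n m : nat) (G : 'rV[R]_n -> 'rV[R]_m -> Prop)
    (xb : 'rV[R]_n) (yb : 'rV[R]_m) (u : 'rV[R]_n) (e : 'I_m -> 'rV[R]_m)
    (lam : 'rV[R]_m) : Prop :=
  [/\ lam != 0, dlcoder G xb yb u 0 lam 0 &
    exists (xk : nat -> 'rV[R]_n) (yk lamk : nat -> 'rV[R]_m) (etak : nat -> 'rV[R]_n),
      (forall k, G (xk k) (yk k) /\ xk k != xb) /\
      xk @ \oo --> xb /\ yk @ \oo --> yb /\ lamk @ \oo --> lam /\
      etak @ \oo --> (0 : 'rV[R]_n) /\
      (fun k => (enorm (xk k - xb))^-1 *: (xk k - xb)) @ \oo --> u /\
      (fun k => (enorm (xk k - xb))^-1 *: (yk k - yb)) @ \oo --> (0 : 'rV[R]_m) /\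
      (forall k, rcoder G (xk k) (yk k) (lamk k) (etak k)) /\
      (forall k (i : 'I_m), dotv lam (e i) != 0 ->
         0 < dotv lam (e i) * dotv (yk k - yb) (e i))].

Definition constraint_qn_multiplier (R : realType) (n m : nat)
    (g : 'rV[R]_n -> 'rV[R]_m) (D : set 'rV[R]_m) (xb u : 'rV[R]_n)
    (e : 'I_m -> 'rV[R]_m) (lam : 'rV[R]_m) : Prop :=
  [/\ lam != 0, dlnormal D (g xb) ('d g xb u) lam, adjoint ('d g xb) lam = 0 &
    exists (xk : nat -> 'rV[R]_n) (zk lamk : nat -> 'rV[R]_m),
      (forall k, xk k != xb /\ D (zk k)) /\
      xk @ \oo --> xb /\ zk @ \oo --> g xb /\ lamk @ \oo --> lam /\
      (fun k => (enorm (xk k - xb))^-1 *: (xk k - xb)) @ \oo --> u /\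
      (fun k => (enorm (xk k - xb))^-1 *: (zk k - g xb)) @ \oo --> 'd g xb u /\
      (forall k, rnormal D (zk k) (lamk k) /\
         forall i : 'I_m, dotv lam (e i) != 0 ->
           0 < dotv lam (e i) * dotv (g (xk k) - zk k) (e i))].

Section QuasiNormality.
Variables (R : realType) (n m : nat) (g : 'rV[R]_n -> 'rV[R]_m) (D : set 'rV[R]_m).
Variables (xb u : 'rV[R]_n) (e : 'I_m -> 'rV[R]_m).
Hypothesis g_C1 : C1 g.

Let dg x : differentiable g x := g_C1.1 x.

Let cvg_g (xk : nat -> 'rV[R]_n) : xk @ \oo --> xb -> (fun k => g (xk k)) @ \oo --> g xb.
Proof. by move=> xkx; exact: (continuous_cvg _ (differentiable_continuous (dg xb)) xkx). Qed.

Lemma qn_multiplier_PhiG_constraint lam :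
  qn_multiplier (PhiG g D) xb 0 u e lam -> constraint_qn_multiplier g D xb u e lam.
Proof.
move=> [lam0 /(dlcoder_PhiG_dlnormal g_C1)[dln adj0]
  [xk [yk [lamk [etak [xk_ok [xkx [yk0 [lamk_lam [_ [dir_u [yk_dir [N sgn]]]]]]]]]]]]].
rewrite !subr0 in dln; split => //.
exists xk, (fun k => g (xk k) - yk k), lamk; do 6?split => //.
- by have [] := xk_ok k.
- by have [] := xk_ok k.
- by rewrite -[g xb]subr0; apply: cvgB (cvg_g xkx) yk0.
- have -> : (fun k => (enorm (xk k - xb))^-1 *: (g (xk k) - yk k - g xb)) =
      (fun k => (enorm (xk k - xb))^-1 *: (g (xk k) - g xb) -
                (enorm (xk k - xb))^-1 *: (yk k - 0)).
    by apply/funext => k; rewrite subr0 -scalerBr addrAC.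
  rewrite -['d g xb u]subr0; apply: cvgB yk_dir.
  by apply: cvg_diff_quotient_seq => // k; have [] := xk_ok k.
move=> k; have [Nz _] := (rcoder_PhiG D _ _ _ (dg _)).1 (N k); split => // i /(sgn k).
by rewrite subr0 subKr.
Qed.

Lemma constraint_qn_multiplier_PhiG lam :
  constraint_qn_multiplier g D xb u e lam -> qn_multiplier (PhiG g D) xb 0 u e lam.
Proof.
move=> [lam0 dln adj0 [xk [zk [lamk [xk_ok [xkx [zk_gxb [lamk_lam [dir_u [zk_dir N]]]]]]]]]].
split => //.
  by rewrite -adj0; apply: dlnormal_dlcoder_PhiG; rewrite // !subr0.
exists xk, (fun k => g (xk k) - zk k), lamk, (fun k => adjoint ('d g (xk k)) (lamk k)).
do 8?split => //.
- by rewrite /PhiG subKr; have [] := xk_ok k.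
- by have [] := xk_ok k.
- by rewrite -(subrr (g xb)); apply: cvgB (cvg_g xkx) zk_gxb.
- by rewrite -adj0; exact: cvg_adjoint g_C1 xkx lamk_lam.
- have -> : (fun k => (enorm (xk k - xb))^-1 *: (g (xk k) - zk k - 0)) =
      (fun k => (enorm (xk k - xb))^-1 *: (g (xk k) - g xb) -
                (enorm (xk k - xb))^-1 *: (zk k - g xb)).
    by apply/funext => k; rewrite subr0 -scalerBr opprB addrA subrK.
  rewrite -(subrr ('d g xb u)); apply: cvgB zk_dir.
  by apply: cvg_diff_quotient_seq => // k; have [] := xk_ok k.
- by move=> k; apply/(rcoder_PhiG D _ _ _ (dg _)); rewrite subKr; have [] := N k.
by move=> k i; rewrite subr0; have [_] := N k; exact.
Qed.

End QuasiNormality.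

Theorem mainTheorem6 (R : realType) (n m : nat)
  (g : 'rV[R]_n -> 'rV[R]_m) (D : set 'rV[R]_m) (xb u : 'rV[R]_n)
  (e : 'I_m -> 'rV[R]_m) :
  C1 g -> closed D -> PhiG g D xb 0 -> enorm u = 1 ->
  (forall i j : 'I_m, dotv (e i) (e j) = (i == j)%:R) ->
  (quasi_normal_dir (PhiG g D) xb 0 u e <->
   ~ exists lam : 'rV[R]_m,
       [/\ lam != 0, dlnormal D (g xb) ('d g xb u) lam,
           adjoint ('d g xb) lam = 0 &
         exists (xk : nat -> 'rV[R]_n) (zk lamk : nat -> 'rV[R]_m),
           (forall k, xk k != xb /\ D (zk k)) /\
           xk @ \oo --> xb /\ zk @ \oo --> g xb /\ lamk @ \oo --> lam /\
           (fun k => (enorm (xk k - xb))^-1 *: (xk k - xb)) @ \oo --> u /\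
           (fun k => (enorm (xk k - xb))^-1 *: (zk k - g xb)) @ \oo --> 'd g xb u /\
           (forall k, rnormal D (zk k) (lamk k) /\
                  forall i : 'I_m, dotv lam (e i) != 0 ->
                    0 < dotv lam (e i) * dotv (g (xk k) - zk k) (e i))]).
Proof.
move=> g_C1 _ _ _ _; split=> no_multiplier [lam multiplier]; apply: no_multiplier.
  by exists lam; exact: constraint_qn_multiplier_PhiG.
by exists lam; exact: qn_multiplier_PhiG_constraint.
Qed.
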